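(* Let $m,k,\ell,q,u,w$ be nonnegative integers with $u\le m$ and $m+(k+2\ell)q = u+(k+2\ell)w$, and set $n = m+(k+2\ell)q$. Let $g\colon \mathbb{C}^m\to\mathbb{C}^u$ and $p\colon \mathbb{C}^{m+q}\to\mathbb{C}^w$ be polynomial maps with real coefficients, and define $f\colon\mathbb{C}^n\to\mathbb{C}^n$ by $$f(a,b_1,\dots,b_k,c_1,\dots,c_\ell,d_1,\dots,d_\ell) = \big(g(a),\ p(a,b_1),\dots,p(a,b_k),\ p(a,c_1),\dots,p(a,c_\ell),\ p(a,d_1),\dots,p(a,d_\ell)\big),$$ where $a\in\mathbb{C}^m$ and $b_r,c_s,d_t\in\mathbb{C}^q$. Then the set $$V=\left\{(a,b_1,\dots,b_k,c_1,\dots,c_\ell,\overline{c_1},\dots,\overline{c_\ell}) : a\in\mathbb{R}^m,\ b_i\in\mathbb{R}^q,\ c_j\in\mathbb{C}^q\right\}\subset\mathbb{C}^n$$ is Newton invariant with respect to $f$, where $\overline{\,\cdot\,}$ denotes (coordinatewise) complex conjugation.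
   Context: For an analytic map $f\colon\mathbb{C}^n\to\mathbb{C}^n$ with Jacobian matrix $Df(x)$, the Newton iteration map $N_f\colon\mathbb{C}^n\to\mathbb{C}^n$ is defined by $N_f(x)=x-Df(x)^{-1}f(x)$ if $Df(x)$ is invertible and $N_f(x)=x$ otherwise; $N_f^k$ denotes the $k$-fold composition of $N_f$. A set $V\subset\mathbb{C}^n$ is called Newton invariant with respect to $f$ if $N_f(v)\in V$ for every $v\in V$, and $\lim_{k\to\infty}N_f^k(v)\in V$ for every $v\in V$ for which this limit exists. *)

From Stdlib Require Import Reals ClassicalEpsilon.
From mathcomp Require Import ssreflect ssrfun ssrbool eqtype ssrnat seq div fintype.




Definition C : Type := (R * R)%type.
Definition RtoC (r : R) : C := (r, 0%R).
Definition C0 : C := RtoC 0%R.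
Definition C1 : C := RtoC 1%R.
Definition Cadd (x y : C) : C := (fst x + fst y, snd x + snd y)%R.
Definition Copp (x : C) : C := (- fst x, - snd x)%R.
Definition Csub (x y : C) : C := Cadd x (Copp y).
Definition Cmul (x y : C) : C :=
  (fst x * fst y - snd x * snd y, fst x * snd y + snd x * fst y)%R.
Definition Cconj (x : C) : C := (fst x, - snd x)%R.
Definition Cnorm (x : C) : R := sqrt (fst x * fst x + snd x * snd x)%R.

Inductive pexpr (V : Type) : Type :=
| PVar (v : V)
| PConst (r : R)
| PAdd (e1 e2 : pexpr V)
| PMul (e1 e2 : pexpr V).
Arguments PMul {V} e1 e2.
Arguments PAdd {V} e1 e2.
Arguments PConst {V} r.
Arguments PVar {V} v.

Fixpoint peval {V : Type} (env : V -> C) (e : pexpr V) : C :=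
  match e with
  | PVar v => env v
  | PConst r => RtoC r
  | PAdd e1 e2 => Cadd (peval env e1) (peval env e2)
  | PMul e1 e2 => Cmul (peval env e1) (peval env e2)
  end.

Fixpoint prename {V W : Type} (h : V -> W) (e : pexpr V) : pexpr W :=
  match e with
  | PVar v => PVar (h v)
  | PConst r => PConst r
  | PAdd e1 e2 => PAdd (prename h e1) (prename h e2)
  | PMul e1 e2 => PMul (prename h e1) (prename h e2)
  end.

Fixpoint pderiv (e : pexpr nat) (j : nat) : pexpr nat :=
  match e with
  | PVar v => PConst (if v == j then 1%R else 0%R)
  | PConst _ => PConst 0%R
  | PAdd e1 e2 => PAdd (pderiv e1 j) (pderiv e2 j)
  | PMul e1 e2 => PAdd (PMul (pderiv e1 j) e2) (PMul e1 (pderiv e2 j))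
  end.

Definition ext (n : nat) (x : 'I_n -> C) : nat -> C :=
  fun i => match (insub i : option 'I_n) with Some o => x o | None => C0 end.
Arguments ext {n} x i.

Definition pm_eval (n : nat) (F : 'I_n -> pexpr nat) (x : 'I_n -> C) : 'I_n -> C :=
  fun i => peval (ext x) (F i).
Arguments pm_eval {n} F x i.

Definition jac (n : nat) (F : 'I_n -> pexpr nat) (x : 'I_n -> C)
  : 'I_n -> 'I_n -> C :=
  fun i j => peval (ext x) (pderiv (F i) (nat_of_ord j)).
Arguments jac {n} F x i j.

Definition Csum (s : seq C) : C := foldr Cadd C0 s.

Definition mv (n : nat) (A : 'I_n -> 'I_n -> C) (v : 'I_n -> C) : 'I_n -> C :=
  fun i => Csum [seq Cmul (A i j) (v j) | j <- enum 'I_n].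
Arguments mv {n} A v i.

Definition matmul (n : nat) (A B : 'I_n -> 'I_n -> C) : 'I_n -> 'I_n -> C :=
  fun i k => Csum [seq Cmul (A i j) (B j k) | j <- enum 'I_n].
Arguments matmul {n} A B i k.

Definition idmat (n : nat) : 'I_n -> 'I_n -> C :=
  fun i j => if i == j then C1 else C0.

Definition is_inverse (n : nat) (A B : 'I_n -> 'I_n -> C) : Prop :=
  matmul A B = @idmat n /\ matmul B A = @idmat n.
Arguments is_inverse {n} A B.

Definition invertible (n : nat) (A : 'I_n -> 'I_n -> C) : Prop :=
  exists B, is_inverse A B.
Arguments invertible {n} A.

Definition newton (n : nat) (F : 'I_n -> pexpr nat) (x : 'I_n -> C) : 'I_n -> C :=
  match excluded_middle_informative (invertible (jac F x)) with
  | left _ =>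
      let B := epsilon (inhabits (fun _ _ => C0)) (is_inverse (jac F x)) in
      fun i => Csub (x i) (mv B (pm_eval F x) i)
  | right _ => x
  end.
Arguments newton {n} F x i.

Definition converges (n : nat) (s : nat -> 'I_n -> C) (L : 'I_n -> C) : Prop :=
  forall eps : R, (eps > 0)%R ->
    exists N : nat, forall t : nat, (N <= t)%N ->
      forall i : 'I_n, (Cnorm (Csub (s t i) (L i)) < eps)%R.
Arguments converges {n} s L.

Definition newton_invariant (n : nat) (F : 'I_n -> pexpr nat)
  (V : ('I_n -> C) -> Prop) : Prop :=
  (forall v, V v -> V (newton F v)) /\
  (forall v L, V v -> converges (fun t => iter t (newton F) v) L -> V L).
Arguments newton_invariant {n} F V.

(* coordinates of x in C^n, n = m + (k+2l)q, are laid out as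
   (a, b_0..b_{k-1}, c_0..c_{l-1}, d_0..d_{l-1}); block r (0 <= r < k+2l)
   occupies indices m + r*q, ..., m + r*q + q - 1. *)

(* variable renaming sending the variables (a, y) of p to (a, block r) *)
Definition blockren (m q r : nat) (v : 'I_(m + q)) : nat :=
  if (nat_of_ord v < m)%N then nat_of_ord v else (m + r * q + (nat_of_ord v - m))%N.

(* components of f: first u are g(a), then block r of w outputs is p(a, block r) *)
Definition fF (m k l q u w : nat) (g : 'I_u -> pexpr 'I_m)
  (p : 'I_w -> pexpr 'I_(m + q)) : 'I_(m + (k + 2 * l) * q) -> pexpr nat :=
  fun o =>
    match (insub (nat_of_ord o) : option 'I_u) with
    | Some o' => prename (fun v : 'I_m => nat_of_ord v) (g o')
    | None =>
        let o1 := (nat_of_ord o - u)%N in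
        match (insub (o1 %% w)%N : option 'I_w) with
        | Some j => prename (blockren m q (o1 %/ w)%N) (p j)
        | None => PConst 0%R
        end
    end.

Definition assemble (m k l q : nat) (a : nat -> R) (b : nat -> nat -> R)
  (c : nat -> nat -> C) (i : nat) : C :=
  if (i < m)%N then RtoC (a i)
  else
    let i1 := (i - m)%N in
    let r := (i1 %/ q)%N in
    let j := (i1 %% q)%N in
    if (r < k)%N then RtoC (b r j)
    else if (r < k + l)%N then c (r - k)%N j
    else Cconj (c (r - k - l)%N j).

Definition Vset (m k l q : nat) (x : 'I_(m + (k + 2 * l) * q) -> C) : Prop :=
  exists (a : nat -> R) (b : nat -> nat -> R) (c : nat -> nat -> C),
    forall i : 'I_(m + (k + 2 * l) * q), x i = assemble m k l q a b c (nat_of_ord i).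

(* Let P exchange each block c_s with d_s, and let Q be the corresponding
   permutation of the components of f.  Then V is exactly the set of x with
   x o P = conj x.  Since g and p have real coefficients, f_(Q i) is f_i with its
   variables renamed by P, so on V we get f(x)_(Q i) = conj f(x)_i and
   Df(x)_(Q i, P j) = conj Df(x)_(i j).  The inverse of Df(x) inherits the
   relation with P and Q exchanged, hence N_f(x) o P = conj N_f(x).  Finally the
   condition x o P = conj x is closed, so limits of Newton iterates stay in V. *)

From Pilot Require Import Defs.
From Stdlib Require Import Reals Lra FunctionalExtensionality ClassicalEpsilon.
From HB Require Import structures.
From mathcomp Require Import ssreflect ssrfun ssrbool eqtype ssrnat seq div fintype bigop zify.

Local Notation C := Defs.C.
Local Notation C1 := Defs.C1.

Lemma Cext (x y : C) : fst x = fst y -> snd x = snd y -> x = y.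
Proof. by case: x => ??; case: y => ?? /= -> ->. Qed.

Ltac Cring := move=> *;
  repeat match goal with z : C |- _ => destruct z end;
  rewrite /C0 /C1 /RtoC /Csub /Copp /Cadd /Cmul /Cconj; apply: Cext => /=; ring.

Lemma CaddA : associative Cadd. Proof. Cring. Qed.
Lemma CaddC : commutative Cadd. Proof. Cring. Qed.
Lemma Cadd0l : left_id C0 Cadd. Proof. Cring. Qed.
Lemma Cadd0r : right_id C0 Cadd. Proof. Cring. Qed.
Lemma CmulA : associative Cmul. Proof. Cring. Qed.
Lemma Cmul1l : left_id C1 Cmul. Proof. Cring. Qed.
Lemma Cmul1r : right_id C1 Cmul. Proof. Cring. Qed.
Lemma Cmul0l : left_zero C0 Cmul. Proof. Cring. Qed.
Lemma Cmul0r : right_zero C0 Cmul. Proof. Cring. Qed.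
Lemma CmulDl : left_distributive Cmul Cadd. Proof. Cring. Qed.
Lemma CmulDr : right_distributive Cmul Cadd. Proof. Cring. Qed.

HB.instance Definition _ := Monoid.isComLaw.Build C C0 Cadd CaddA CaddC Cadd0l.
HB.instance Definition _ := Monoid.isMulLaw.Build C C0 Cmul Cmul0l Cmul0r.
HB.instance Definition _ := Monoid.isAddLaw.Build C Cmul Cadd CmulDl CmulDr.

Lemma CconjD x y : Cconj (Cadd x y) = Cadd (Cconj x) (Cconj y). Proof. Cring. Qed.
Lemma CconjB x y : Cconj (Csub x y) = Csub (Cconj x) (Cconj y). Proof. Cring. Qed.
Lemma CconjM x y : Cconj (Cmul x y) = Cmul (Cconj x) (Cconj y). Proof. Cring. Qed.
Lemma CconjK : involutive Cconj. Proof. Cring. Qed.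
Lemma CconjR r : Cconj (RtoC r) = RtoC r. Proof. Cring. Qed.
Lemma Cconj0 : Cconj C0 = C0. Proof. exact: CconjR. Qed.
Lemma Cconj1 : Cconj C1 = C1. Proof. exact: CconjR. Qed.

Lemma Cconj_real (z : C) : Cconj z = z -> z = RtoC (fst z).
Proof. by case: z => x y [] hy; rewrite /RtoC /=; congr pair; lra. Qed.

Lemma Cconj_sum n (F : 'I_n -> C) :
  Cconj (\big[Cadd/C0]_j F j) = \big[Cadd/C0]_j Cconj (F j).
Proof. exact: (big_morph _ CconjD Cconj0). Qed.

Lemma CsumE n (F : 'I_n -> C) : Csum [seq F j | j <- enum 'I_n] = \big[Cadd/C0]_j F j.
Proof. by rewrite /Csum foldrE big_map big_enum. Qed.

Section Matrices.
Variable n : nat.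
Implicit Types (A B D : 'I_n -> 'I_n -> C) (v : 'I_n -> C).

Lemma matmulE A B i k : matmul A B i k = \big[Cadd/C0]_j Cmul (A i j) (B j k).
Proof. exact: CsumE. Qed.

Lemma mvE A v i : mv A v i = \big[Cadd/C0]_j Cmul (A i j) (v j).
Proof. exact: CsumE. Qed.

Lemma matmulA A B D : matmul A (matmul B D) = matmul (matmul A B) D.
Proof.
apply: functional_extensionality => i; apply: functional_extensionality => l.
rewrite matmulE (eq_bigr (fun j => \big[Cadd/C0]_k Cmul (A i j) (Cmul (B j k) (D k l)))).
  rewrite exchange_big matmulE; apply: eq_bigr => k _.
  by rewrite matmulE big_distrl; apply: eq_bigr => j _; rewrite CmulA.
by move=> j _; rewrite matmulE big_distrr.
Qed.

Lemma matmul1mx A : matmul (idmat n) A = A.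
Proof.
apply: functional_extensionality => i; apply: functional_extensionality => k.
rewrite matmulE (bigD1 i) //= /idmat eqxx Cmul1l big1 ?Cadd0r // => j.
by rewrite eq_sym => /negbTE ->; rewrite Cmul0l.
Qed.

Lemma matmulmx1 A : matmul A (idmat n) = A.
Proof.
apply: functional_extensionality => i; apply: functional_extensionality => k.
rewrite matmulE (bigD1 k) //= /idmat eqxx Cmul1r big1 ?Cadd0r // => j.
by move=> /negbTE ->; rewrite Cmul0r.
Qed.

Lemma linv_eq_rinv A B D : matmul B A = idmat n -> matmul A D = idmat n -> B = D.
Proof. by move=> BA AD; rewrite -[B]matmulmx1 -AD matmulA BA matmul1mx. Qed.

Section ConjugatePermutation.
Variables P Q : 'I_n -> 'I_n.
Hypotheses (PK : involutive P) (QK : involutive Q).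

Lemma inverse_conj_perm A B :
  (forall i j, A (Q i) (P j) = Cconj (A i j)) -> is_inverse A B ->
  forall i j, B (P i) (Q j) = Cconj (B i j).
Proof.
move=> AQP [AB BA]; pose D i j := Cconj (B (P i) (Q j)).
suff AD : matmul A D = idmat n.
  by move=> i j; rewrite {1}(linv_eq_rinv _ _ _ BA AD) /D PK QK.
apply: functional_extensionality => i; apply: functional_extensionality => j.
have -> : idmat n i j = Cconj (matmul A B (Q i) (Q j)).
  by rewrite AB /idmat (can_eq QK); case: (i == j); rewrite ?Cconj0 ?Cconj1.
rewrite [in RHS]matmulE (reindex_inj (can_inj PK)) Cconj_sum matmulE.
by apply: eq_bigr => k _; rewrite CconjM AQP CconjK.
Qed.

Lemma mv_conj_perm B v :
  (forall i j, B (P i) (Q j) = Cconj (B i j)) -> (forall j, v (Q j) = Cconj (v j)) ->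
  forall i, mv B v (P i) = Cconj (mv B v i).
Proof.
move=> BPQ vQ i; rewrite !mvE Cconj_sum (reindex_inj (can_inj QK)).
by apply: eq_bigr => j _; rewrite BPQ vQ CconjM.
Qed.

End ConjugatePermutation.
End Matrices.

Arguments inverse_conj_perm {n P Q}.
Arguments mv_conj_perm {n P Q}.

Lemma eq_peval V (env1 env2 : V -> C) e : env1 =1 env2 -> peval env1 e = peval env2 e.
Proof. by move=> eq_env; elim: e => //= [e1 -> e2 ->|e1 -> e2 ->]. Qed.

Lemma peval_prename V W (env : W -> C) (h : V -> W) e :
  peval env (prename h e) = peval (env \o h) e.
Proof. by elim: e => //= [e1 -> e2 ->|e1 -> e2 ->]. Qed.

Lemma prename_comp U V W (h1 : U -> V) (h2 : V -> W) e :
  prename h2 (prename h1 e) = prename (h2 \o h1) e.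
Proof. by elim: e => //= [e1 -> e2 ->|e1 -> e2 ->]. Qed.

Lemma eq_prename V W (h1 h2 : V -> W) e : h1 =1 h2 -> prename h1 e = prename h2 e.
Proof. by move=> eq_h; elim: e => //= [v|e1 -> e2 ->|e1 -> e2 ->]; rewrite ?eq_h. Qed.

Lemma peval_conj V (env : V -> C) e : peval (Cconj \o env) e = Cconj (peval env e).
Proof. by elim: e => //= [r|e1 -> e2 ->|e1 -> e2 ->]; rewrite ?CconjR ?CconjD ?CconjM. Qed.

Lemma pderiv_prename (h : nat -> nat) e j :
  injective h -> pderiv (prename h e) (h j) = prename h (pderiv e j).
Proof.
by move=> h_inj; elim: e => //= [v|e1 -> e2 ->|e1 -> e2 ->]; rewrite ?(inj_eq h_inj).
Qed.

Lemma extE n (x : 'I_n -> C) (j : 'I_n) : ext x j = x j.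
Proof. by rewrite /ext valK. Qed.

Lemma ext_out n (x : 'I_n -> C) i : (n <= i)%N -> ext x i = C0.
Proof. by move=> le_ni; rewrite /ext insubN // -leqNgt. Qed.

Definition conj_fixed n (P : 'I_n -> 'I_n) (x : 'I_n -> C) := forall j, x (P j) = Cconj (x j).
Arguments conj_fixed {n} P x.

Lemma Rabs_fst_le_Cnorm (z : C) : (Rabs (fst z) <= Cnorm z)%R.
Proof. by rewrite -sqrt_Rsqr_abs; apply: sqrt_le_1_alt; rewrite /Rsqr; nra. Qed.

Lemma Rabs_snd_le_Cnorm (z : C) : (Rabs (snd z) <= Cnorm z)%R.
Proof. by rewrite -sqrt_Rsqr_abs; apply: sqrt_le_1_alt; rewrite /Rsqr; nra. Qed.

Section Limits.
Variables (n : nat) (s : nat -> 'I_n -> C) (L : 'I_n -> C).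
Hypothesis s_L : converges s L.

Lemma converges_fst i : Un_cv (fun t => fst (s t i)) (fst (L i)).
Proof.
move=> eps /s_L [N s_N]; exists N => t /leP le_Nt; apply: Rle_lt_trans (s_N t le_Nt i).
exact: (Rabs_fst_le_Cnorm (Csub _ _)).
Qed.

Lemma converges_snd i : Un_cv (fun t => snd (s t i)) (snd (L i)).
Proof.
move=> eps /s_L [N s_N]; exists N => t /leP le_Nt; apply: Rle_lt_trans (s_N t le_Nt i).
exact: (Rabs_snd_le_Cnorm (Csub _ _)).
Qed.

Lemma conj_fixed_closed (P : 'I_n -> 'I_n) : (forall t, conj_fixed P (s t)) -> conj_fixed P L.
Proof.
move=> s_fixed j; apply: Cext => /=.
- apply: (UL_sequence _ _ _ (converges_fst (P j))).
  by apply: (Un_cv_ext _ _ _ _ (converges_fst j)) => t; rewrite s_fixed.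
- apply: (UL_sequence _ _ _ (converges_snd (P j))).
  by apply: (Un_cv_ext _ _ _ _ (CV_opp _ _ (converges_snd j))) => t; rewrite s_fixed.
Qed.

End Limits.

Arguments conj_fixed_closed {n s L}.

Section ConjugationSymmetry.
Variables (n : nat) (F : 'I_n -> pexpr nat) (P Q : 'I_n -> 'I_n) (pi : nat -> nat).
Hypotheses (PK : involutive P) (QK : involutive Q) (pi_inj : injective pi).
Hypothesis pi_ord : forall j : 'I_n, pi j = P j.
Hypothesis F_equivariant : forall i, F (Q i) = prename pi (F i).

Lemma pi_out i : (n <= i)%N -> (n <= pi i)%N.
Proof.
(* pi is injective and already maps [0, n) onto itself. *)
move=> le_ni; rewrite leqNgt; apply/negP => lt_pin.
suff eq_i : nat_of_ord (P (Ordinal lt_pin)) = i.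
  by move: (ltn_ord (P (Ordinal lt_pin))); rewrite eq_i ltnNge le_ni.
by apply: pi_inj; rewrite pi_ord PK.
Qed.

Lemma ext_conj_fixed x : conj_fixed P x -> forall i, ext x (pi i) = Cconj (ext x i).
Proof.
move=> x_fixed i; case: (ltnP i n) => [lt_in|le_ni].
  by rewrite -[i]/(nat_of_ord (Ordinal lt_in)) pi_ord !extE x_fixed.
by rewrite !ext_out ?Cconj0 ?pi_out.
Qed.

Lemma pm_eval_conj x : conj_fixed P x -> forall i, pm_eval F x (Q i) = Cconj (pm_eval F x i).
Proof.
move=> x_fixed i; rewrite /pm_eval F_equivariant peval_prename -peval_conj.
exact/eq_peval/ext_conj_fixed.
Qed.

Lemma jac_conj x : conj_fixed P x -> forall i j, jac F x (Q i) (P j) = Cconj (jac F x i j).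
Proof.
move=> x_fixed i j; rewrite /jac F_equivariant -pi_ord pderiv_prename // peval_prename.
by rewrite -peval_conj; exact/eq_peval/ext_conj_fixed.
Qed.

Lemma newton_conj_fixed x : conj_fixed P x -> conj_fixed P (newton F x).
Proof.
move=> x_fixed; rewrite /newton; case: excluded_middle_informative => // J_inv j /=.
have J_B := epsilon_spec (inhabits (fun _ _ => C0)) _ J_inv.
rewrite CconjB x_fixed (mv_conj_perm QK) //; last exact: pm_eval_conj.
exact: inverse_conj_perm PK QK _ _ (jac_conj _ x_fixed) J_B.
Qed.

Theorem newton_invariant_conj_fixed : newton_invariant F (conj_fixed P).
Proof.
split=> [|x L x_fixed x_L]; first exact: newton_conj_fixed.
apply: (conj_fixed_closed x_L) => t; elim: t => //= t IH; exact: newton_conj_fixed.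
Qed.

End ConjugationSymmetry.

Arguments ext_conj_fixed {n P pi}.
Arguments newton_invariant_conj_fixed {n F P Q pi}.

Lemma newton_invariant_eq {n} {F : 'I_n -> pexpr nat} {V W : ('I_n -> C) -> Prop} :
  (forall x, V x <-> W x) -> newton_invariant F V -> newton_invariant F W.
Proof.
move=> VW [V_step V_lim]; split=> [x /VW /V_step /VW //|x L /VW x_V x_L].
exact/VW/(V_lim x).
Qed.

Section BlockLayout.
Variables k l : nat.

Definition cd_swap base q i :=
  if (base + k * q <= i < base + (k + l) * q)%N then (i + l * q)%N
  else if (base + (k + l) * q <= i < base + (k + 2 * l) * q)%N then (i - l * q)%N
  else i.

Lemma cd_swapK base q : involutive (cd_swap base q).
Proof. by move=> i; rewrite /cd_swap; do !case: ifP => /=; lia. Qed.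

Lemma cd_swap_inj base q : injective (cd_swap base q).
Proof. exact: can_inj (cd_swapK base q). Qed.

Lemma cd_swap_lt base q n :
  n = (base + (k + 2 * l) * q)%N -> forall i : 'I_n, (cd_swap base q i < n)%N.
Proof. by move=> -> i; have := ltn_ord i; rewrite /cd_swap; do !case: ifP => /=; lia. Qed.

Definition cd_swap_ord base q n (e : n = (base + (k + 2 * l) * q)%N) (i : 'I_n) : 'I_n :=
  Ordinal (cd_swap_lt base q n e i).

Lemma cd_swap_ordK base q n e : involutive (@cd_swap_ord base q n e).
Proof. by move=> i; apply: val_inj; rewrite /= cd_swapK. Qed.

Variant layout_spec base q : nat -> Type :=
| LayoutA i of (i < base)%N : layout_spec base q i
| LayoutB r t of (r < k)%N & (t < q)%N : layout_spec base q (base + r * q + t)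
| LayoutC s t of (s < l)%N & (t < q)%N : layout_spec base q (base + (k + s) * q + t)
| LayoutD s t of (s < l)%N & (t < q)%N : layout_spec base q (base + (k + l + s) * q + t).

Lemma layoutP base q i : (i < base + (k + 2 * l) * q)%N -> layout_spec base q i.
Proof.
case: (ltnP i base) => [lt_ib _|le_bi lt_i]; first exact: LayoutA.
have q_gt0 : (0 < q)%N by case: q lt_i => [|//]; rewrite muln0 addn0; lia.
have lt_tq : ((i - base) %% q < q)%N by rewrite ltn_mod.
have i_eq : i = (base + (i - base) %/ q * q + (i - base) %% q)%N.
  by rewrite -addnA -divn_eq; lia.
move: ((i - base) %/ q) ((i - base) %% q) i_eq lt_tq lt_i => r t -> lt_tq lt_i.
have lt_r : (r < k + 2 * l)%N by rewrite -(ltn_pmul2r q_gt0); lia.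
case: (ltnP r k) => [lt_rk|le_kr]; first exact: LayoutB.
case: (ltnP r (k + l)) => [lt_rkl|le_klr].
  by rewrite (_ : r = k + (r - k))%N; [apply: LayoutC; lia | lia].
by rewrite (_ : r = k + l + (r - k - l))%N; [apply: LayoutD; lia | lia].
Qed.

Lemma cd_swap_a base q i : (i < base)%N -> cd_swap base q i = i.
Proof. by rewrite /cd_swap; do !case: ifP => /=; lia. Qed.

Lemma cd_swap_b base q r t : (r < k)%N -> (t < q)%N ->
  cd_swap base q (base + r * q + t) = (base + r * q + t)%N.
Proof. by rewrite /cd_swap; do !case: ifP => /=; nia. Qed.

Lemma cd_swap_c base q s t : (s < l)%N -> (t < q)%N ->
  cd_swap base q (base + (k + s) * q + t) = (base + (k + l + s) * q + t)%N.
Proof. by rewrite /cd_swap; do !case: ifP => /=; nia. Qed.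

Lemma cd_swap_d base q s t : (s < l)%N -> (t < q)%N ->
  cd_swap base q (base + (k + l + s) * q + t) = (base + (k + s) * q + t)%N.
Proof. by move=> lt_sl lt_tq; rewrite -cd_swap_c ?cd_swapK. Qed.

End BlockLayout.

Arguments layoutP {k l base q i}.

Section Assemble.
Variables (m k l q : nat) (a : nat -> R) (b : nat -> nat -> R) (c : nat -> nat -> C).
Local Notation assemble := (assemble m k l q a b c).

Lemma assemble_a i : (i < m)%N -> assemble i = RtoC (a i).
Proof. by rewrite /assemble => ->. Qed.

Lemma assemble_block r t : (t < q)%N -> assemble (m + r * q + t) =
  if (r < k)%N then RtoC (b r t) else if (r < k + l)%N then c (r - k) t
  else Cconj (c (r - k - l) t).
Proof.
move=> lt_tq; rewrite /assemble ifN; last by lia.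
rewrite (_ : m + r * q + t - m = r * q + t)%N; last by lia.
by rewrite divnMDl ?modnMDl ?divn_small ?modn_small ?addn0 //; lia.
Qed.

Lemma assemble_b r t : (r < k)%N -> (t < q)%N -> assemble (m + r * q + t) = RtoC (b r t).
Proof. by move=> lt_rk lt_tq; rewrite assemble_block // lt_rk. Qed.

Lemma assemble_c s t : (s < l)%N -> (t < q)%N -> assemble (m + (k + s) * q + t) = c s t.
Proof.
by move=> lt_sl lt_tq; rewrite assemble_block // ltnNge leq_addr ltn_add2l lt_sl addKn.
Qed.

Lemma assemble_d s t : (s < l)%N -> (t < q)%N ->
  assemble (m + (k + l + s) * q + t) = Cconj (c s t).
Proof.
move=> lt_sl lt_tq; rewrite assemble_block // !ifN; try lia.
by rewrite (_ : k + l + s - k - l = s)%N //; lia.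
Qed.

Lemma assemble_cd_swap i : (i < m + (k + 2 * l) * q)%N ->
  assemble (cd_swap k l m q i) = Cconj (assemble i).
Proof.
case/layoutP=> [{}i lt_im|r t lt_rk lt_tq|s t lt_sl lt_tq|s t lt_sl lt_tq].
- by rewrite cd_swap_a // assemble_a // CconjR.
- by rewrite cd_swap_b // assemble_b // CconjR.
- by rewrite cd_swap_c // assemble_d // assemble_c.
- by rewrite cd_swap_d // assemble_c // assemble_d // CconjK.
Qed.

End Assemble.

Lemma conj_fixed_iff_Vset m k l q (x : 'I_(m + (k + 2 * l) * q) -> C) :
  conj_fixed (cd_swap_ord k l m q _ erefl) x <-> Vset m k l q x.
Proof.
split=> [x_fixed|[a [b [c x_eq]]] j]; last by rewrite !x_eq assemble_cd_swap.
have x_sym := ext_conj_fixed (cd_swap_ordK k l m q _ erefl) (cd_swap_inj k l m q)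
  (fun=> erefl) _ x_fixed.
exists (fun i => fst (ext x i)), (fun r t => fst (ext x (m + r * q + t))),
  (fun s t => ext x (m + (k + s) * q + t)).
move=> j; rewrite -extE.
case: (layoutP (ltn_ord j)) => [i lt_im|r t lt_rk lt_tq|s t lt_sl lt_tq|s t lt_sl lt_tq].
- by rewrite assemble_a //; apply: Cconj_real; rewrite -x_sym cd_swap_a.
- by rewrite assemble_b //; apply: Cconj_real; rewrite -x_sym cd_swap_b.
- by rewrite assemble_c.
- by rewrite assemble_d // -x_sym cd_swap_c.
Qed.

Section NewtonMapSymmetry.
Variables (m k l q u w : nat).
Hypothesis hdim : (m + (k + 2 * l) * q)%N = (u + (k + 2 * l) * w)%N.
Variables (g : 'I_u -> pexpr 'I_m) (p : 'I_w -> pexpr 'I_(m + q)).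
Local Notation N := (m + (k + 2 * l) * q)%N.
Local Notation F := (fF m k l q u w g p).
Local Notation swap_in := (cd_swap k l m q).

Lemma fF_a {o : 'I_N} {i} (lt_iu : (i < u)%N) :
  nat_of_ord o = i -> F o = prename (@nat_of_ord m) (g (Ordinal lt_iu)).
Proof. by move=> o_i; rewrite /fF o_i insubT. Qed.

Lemma fF_block {o : 'I_N} {r t} (lt_tw : (t < w)%N) :
  nat_of_ord o = (u + r * w + t)%N -> F o = prename (blockren m q r) (p (Ordinal lt_tw)).
Proof.
move=> o_rt; rewrite /fF o_rt insubN; last by rewrite -leqNgt -addnA leq_addr.
rewrite (_ : u + r * w + t - u = r * w + t)%N; last by lia.
by rewrite divnMDl ?modnMDl ?divn_small ?modn_small ?addn0 ?insubT //; lia.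
Qed.

Lemma cd_swap_blockren r r' :
  (forall t, (t < q)%N -> swap_in (m + r * q + t) = (m + r' * q + t)%N) ->
  swap_in \o blockren m q r =1 blockren m q r'.
Proof.
move=> swap_r v; rewrite /blockren /=; case: ifP => [lt_vm|]; first exact: cd_swap_a.
by move=> /negbT; rewrite -leqNgt => le_mv; apply: swap_r; have := ltn_ord v; lia.
Qed.

Lemma fF_block_equivariant {o o' : 'I_N} {r r' t} : (t < w)%N ->
  nat_of_ord o = (u + r * w + t)%N -> nat_of_ord o' = (u + r' * w + t)%N ->
  (forall t', (t' < q)%N -> swap_in (m + r * q + t') = (m + r' * q + t')%N) ->
  F o' = prename swap_in (F o).
Proof.
move=> lt_tw o_rt o'_rt swap_r; rewrite (fF_block lt_tw o_rt) (fF_block lt_tw o'_rt).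
by rewrite prename_comp; apply/esym/eq_prename/cd_swap_blockren.
Qed.

Lemma fF_equivariant (o : 'I_N) : F (cd_swap_ord k l u w N hdim o) = prename swap_in (F o).
Proof.
have lt_o : (o < u + (k + 2 * l) * w)%N by rewrite -hdim.
have : nat_of_ord (cd_swap_ord k l u w N hdim o) = cd_swap k l u w o by [].
move: lt_o; move E: (nat_of_ord o) => i lt_i.
case/layoutP: lt_i E => [{}i lt_iu|r t lt_rk lt_tw|s t lt_sl lt_tw|s t lt_sl lt_tw] E.
- rewrite cd_swap_a // => E'; rewrite (fF_a lt_iu E) (fF_a lt_iu E') prename_comp.
  by apply: eq_prename => v /=; rewrite cd_swap_a.
- rewrite cd_swap_b // => E'; apply: (fF_block_equivariant lt_tw E E') => t'.
  exact: cd_swap_b.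
- rewrite cd_swap_c // => E'; apply: (fF_block_equivariant lt_tw E E') => t'.
  exact: cd_swap_c.
- rewrite cd_swap_d // => E'; apply: (fF_block_equivariant lt_tw E E') => t'.
  exact: cd_swap_d.
Qed.

End NewtonMapSymmetry.

Arguments fF_equivariant {m k l q u w}.

Theorem theorem2 (m k l q u w : nat) (hum : (u <= m)%N)
  (hdim : (m + (k + 2 * l) * q)%N = (u + (k + 2 * l) * w)%N)
  (g : 'I_u -> pexpr 'I_m) (p : 'I_w -> pexpr 'I_(m + q)) :
  newton_invariant (fF m k l q u w g p) (Vset m k l q).
Proof.
apply: (newton_invariant_eq (conj_fixed_iff_Vset m k l q)).
exact: (newton_invariant_conj_fixed (cd_swap_ordK k l m q _ erefl)
  (cd_swap_ordK k l u w _ hdim) (cd_swap_inj k l m q) (fun=> erefl)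
  (fF_equivariant hdim g p)).
Qed.
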